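(* Let $p=4m+1$ be a prime, put $n=2m$, and let $A_0=(a_0,\ldots,a_n)\in\mathbb{F}_p^{n+1}$ satisfy $a_i^2\neq a_j^2$ for all $0\le i<j\le n$. For $u,v\in\mathbb{F}_p$ define \[ D_{A_0}(u,v)=\det\left[\chi(a_i+a_j)+\chi(a_i-a_j)+u\,\chi(a_i^2+va_j^2)\right]_{0\le i,j\le n}. \] Then \[ D_{A_0}(u,v)\equiv(-1)^{m(2m+1)}u^{2m+1}v^{m(2m+1)}\left(\prod_{r=0}^{2m}\binom{2m}{r}\right)\prod_{0\le i<j\le 2m}(a_j^2-a_i^2)^2 \pmod p. \]
   Context: $\chi(t)=\left(\frac{t}{p}\right)$ is the Legendre symbol on $\mathbb{F}_p$, with $\chi(0)=0$; the determinant is an integer and the congruence is taken modulo $p$ (equivalently, as an identity in $\mathbb{F}_p$). *)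

From mathcomp Require Import all_boot all_order all_algebra.
Set Implicit Arguments. Unset Strict Implicit. Unset Printing Implicit Defensive.
Import GRing.Theory.
Local Open Scope ring_scope.

Definition legendre (p : nat) (t : 'F_p) : int :=
  if t == 0 then 0
  else if [exists y : 'F_p, y ^+ 2 == t] then 1 else -1.

From mathcomp Require Import all_boot all_order all_algebra all_field zify ring.
Set Implicit Arguments. Unset Strict Implicit. Unset Printing Implicit Defensive.
Import GRing.Theory.
Local Open Scope ring_scope.

(* By Euler's criterion chi(t) = t^(2m) in F_p, so the matrix becomes
   [(a_i + a_j)^(2m) + (a_i - a_j)^(2m) + u (a_i^2 + v a_j^2)^(2m)].  Expanding
   binomially, every entry is a bilinear form sum_(r,k) x_i^r B_rk x_j^k in the
   x_i = a_i^2, i.e. the matrix is V^T B V with V the Vandermonde matrix of the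
   a_i^2.  The first two summands only contribute to B on the antidiagonal
   r + k = m, the third one on r + k = 2m with entries u v^k C(2m, k); hence B
   vanishes below its main antidiagonal and det B is the signed product of the
   u v^k C(2m, k), while det V^2 is the squared Vandermonde product.  The
   identity thus holds over any commutative ring once chi is replaced by the
   2m-th power. *)

Section FiniteFieldSquares.
Variable F : finFieldType.

Lemma expf_card_pred (x : F) : x != 0 -> x ^+ #|F|.-1 = 1.
Proof.
move=> x_nz; apply: (mulIf x_nz); rewrite mul1r -exprSr prednK ?expf_card //.
by rewrite (cardD1 0).
Qed.

Lemma dvdp_genPoly_root (q : {poly F}) :
  (1 < size q)%N -> q %| 'X^#|F| - 'X -> exists x, root q x.
Proof.
move=> q_nonconst; rewrite finField_genPoly => q_dvd.
apply/existsP; apply: contraLR q_dvd; rewrite negb_exists => /forallP no_root.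
have q_coprime : coprimep q (\prod_x ('X - x%:P)).
  apply: (big_ind (coprimep q)) => [|r s|x _]; rewrite ?coprimep1 ?coprimepMr //.
  - by move=> -> ->.
  - by rewrite coprimep_XsubC.
apply/negP => /coprimep_dvdl/(_ q_coprime).
by rewrite coprimepp => /eqP size_q1; rewrite size_q1 in q_nonconst.
Qed.

Lemma sqrf_of_expf_half (t : F) :
  odd #|F| -> t ^+ #|F|./2 = 1 -> exists y, y ^+ 2 = t.
Proof.
move=> F_odd t_half.
have [||y /rootP] := @dvdp_genPoly_root ('X^2 - t%:P).
- by rewrite size_XnsubC.
- have ->: 'X^#|F| - 'X = 'X * (('X^2) ^+ #|F|./2 - (t%:P) ^+ #|F|./2) :> {poly F}.
    rewrite -polyC_exp t_half mulrBr mulr1 -exprM -exprS mul2n.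
    by rewrite -[in LHS](odd_double_half #|F|) F_odd.
  by rewrite subrXX dvdp_mull ?dvdp_mulr.
- by rewrite !hornerE => /subr0_eq; exists y.
Qed.
End FiniteFieldSquares.

Lemma legendreE (p : nat) (t : 'F_p) :
  prime p -> odd p -> (legendre t)%:~R = t ^+ p./2.
Proof.
move=> p_pr p_odd.
have p_pred : p.-1 = (p./2 * 2)%N.
  by rewrite -{1}(odd_double_half p) p_odd muln2.
have fermat (x : 'F_p) : x != 0 -> x ^+ (p./2 * 2) = 1.
  by move/expf_card_pred; rewrite card_Fp // p_pred.
rewrite /legendre; have [->|t_nz] := eqVneq t 0.
  have half_gt0 : (0 < p./2)%N by have := prime_gt1 p_pr; lia.
  by rewrite expr0n gtn_eqF.
case: existsP => [[y /eqP y2]|no_sqrt].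
  rewrite -y2 -exprM mulnC fermat //.
  by apply: contra_neq t_nz => y0; rewrite -y2 y0 expr0n.
have : (t ^+ p./2) ^+ 2 = 1 by rewrite -exprM fermat.
move/eqP; rewrite sqrf_eq1 => /orP[/eqP t_half|/eqP -> //].
have [y y2] : exists y, y ^+ 2 = t by apply: sqrf_of_expf_half; rewrite card_Fp.
by case: no_sqrt; exists y; rewrite y2.
Qed.

Lemma det_antitrig (R : comRingType) n (A : 'M[R]_n) :
  (forall i j : 'I_n, (n <= i + j)%N -> A i j = 0) ->
  \det A = (-1) ^+ 'C(n, 2) * \prod_(j < n) A (rev_ord j) j.
Proof.
elim: n A => [|n IHn] A A_antitrig; first by rewrite det_mx00 big_ord0 mulr1.
rewrite (expand_det_row _ ord_max) (bigD1 ord0) //= big1 ?addr0; last first.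
  by move=> [[|j] lt_j] //= _; rewrite A_antitrig ?mul0r //= addnS ltnS leq_addr.
rewrite /cofactor IHn; last first.
  move=> i j ij_big; rewrite !mxE A_antitrig //= /bump.
  by have := ltn_ord i; case: leqP; lia.
rewrite big_ord_recl binS bin1 addn0 exprD.
have -> : rev_ord (ord0 : 'I_n.+1) = ord_max by apply/val_inj; rewrite /= subn1.
have sub_entry (j : 'I_n) :
    row' ord_max (col' ord0 A) (rev_ord j) j = A (rev_ord (lift ord0 j)) (lift ord0 j).
  rewrite !mxE; congr (A _ _); apply/val_inj; rewrite /= /bump.
  by have := ltn_ord j; case: leqP; lia.
under eq_bigr do rewrite sub_entry.
rewrite /=; ring.
Qed.

Lemma sum_ord_even_odd (V : nmodType) (g : nat -> V) n :
  \sum_(k < (2 * n).+1) g k =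
  \sum_(l < n.+1) g (2 * l)%N + \sum_(l < n) g (2 * l).+1.
Proof.
elim: n => [|n IHn]; first by rewrite !big_ord1 big_ord0 addr0.
rewrite (big_ord_recr n.+1 (fun l => g (2 * l)%N)).
rewrite (big_ord_recr n (fun l => g (2 * l).+1)) mulnS.
rewrite (big_ord_recr (2 + 2 * n)) (big_ord_recr (2 * n).+1) IHn /=.
by rewrite -!addrA; congr (_ + _); rewrite [RHS]addrC addrA.
Qed.

Section BinomialDeterminant.
Variable R : comRingType.

Lemma exprDn_addBn (c d : R) m :
  (c + d) ^+ (2 * m) + (c - d) ^+ (2 * m) =
  \sum_(k < m.+1) (2 * 'C(2 * m, 2 * k))%:R * (c ^+ 2) ^+ (m - k) * (d ^+ 2) ^+ k.
Proof.
pose g i := c ^+ (2 * m - i) * d ^+ i *+ 'C(2 * m, i)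
  + c ^+ (2 * m - i) * (- d) ^+ i *+ 'C(2 * m, i).
rewrite !exprDn -big_split /= (sum_ord_even_odd g).
rewrite [X in _ + X]big1 ?addr0 => [|l _]; last first.
  by rewrite /g exprNn -signr_odd /= oddM mulN1r mulrN mulNrn addrN.
apply: eq_bigr => k _.
by rewrite /g -mulnBr !exprM sqrrN -mulrnDr addnn -mul2n -mulrA mulr_natl.
Qed.

Definition antidiag_mx n N (c : nat -> R) : 'M[R]_n :=
  \matrix_(r, s) if (r + s == N)%N then c s else 0.

Lemma antidiag_mx_form n N (c : nat -> R) (X Y : R) : (N < n)%N ->
  \sum_(r < n) \sum_(s < n) X ^+ r * antidiag_mx n N c r s * Y ^+ s =
  \sum_(s < N.+1) c s * X ^+ (N - s) * Y ^+ s.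
Proof.
move=> N_lt_n; pose t s := c s * X ^+ (N - s) * Y ^+ s.
rewrite exchange_big (big_ord_widen n t) // [RHS]big_mkcond.
apply: eq_bigr => s _; case: ifPn => [s_le_N | N_lt_s].
  rewrite (eq_bigr (fun r : 'I_n => if r == (N - s)%N :> nat then t s else 0)).
    by rewrite -big_mkcond (big_ord1_eq _ (fun=> t s)) ifT //; lia.
  move=> r _; rewrite mxE; have -> : (r + s == N)%N = (r == (N - s)%N :> nat) by lia.
  by case: eqP => [->|_]; rewrite ?mulr0 ?mul0r // (mulrC (X ^+ _)).
by apply: big1 => r _; rewrite mxE ifF ?mulr0 ?mul0r //; lia.
Qed.

Lemma trVandermonde_mulmxE n k (x : 'rV[R]_n) (B : 'M[R]_k) i j :
  ((Vandermonde k x)^T *m B *m Vandermonde k x) i j =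
  \sum_(r < k) \sum_(s < k) x 0 i ^+ r * B r s * x 0 j ^+ s.
Proof.
rewrite mxE exchange_big; apply: eq_bigr => s _; rewrite !mxE big_distrl.
by apply: eq_bigr => r _; rewrite !mxE.
Qed.

Definition binomial_mx m (a : 'I_(2 * m).+1 -> R) (u v : R) : 'M[R]_((2 * m).+1) :=
  \matrix_(i, j) ((a i + a j) ^+ (2 * m) + (a i - a j) ^+ (2 * m)
                  + u * (a i ^+ 2 + v * a j ^+ 2) ^+ (2 * m)).

Definition binomial_coef_mx m (u v : R) : 'M[R]_((2 * m).+1) :=
  antidiag_mx _ m (fun k => (2 * 'C(2 * m, 2 * k))%:R)
  + antidiag_mx _ (2 * m) (fun k => u * v ^+ k * 'C(2 * m, k)%:R).

Lemma binomial_mxE m (a : 'I_(2 * m).+1 -> R) (u v : R) :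
  let V := Vandermonde (2 * m).+1 (\row_j a j ^+ 2) in
  binomial_mx a u v = V^T *m binomial_coef_mx m u v *m V.
Proof.
apply/matrixP => i j; rewrite trVandermonde_mulmxE !mxE.
under eq_bigr do under eq_bigr do rewrite mxE mulrDr mulrDl.
under eq_bigr do rewrite big_split; rewrite big_split /=.
rewrite !antidiag_mx_form ?ltnS ?leq_pmull // -exprDn_addBn; congr (_ + _).
rewrite exprDn big_distrr; apply: eq_bigr => k _ /=.
by rewrite (exprMn _ v) -mulr_natr; ring.
Qed.

Lemma det_binomial_coef_mx m (u v : R) : (0 < m)%N ->
  \det (binomial_coef_mx m u v) = (-1) ^+ (m * (2 * m + 1)) * u ^+ (2 * m + 1)
    * v ^+ (m * (2 * m + 1)) * ((\prod_(k < (2 * m).+1) 'C(2 * m, k))%N)%:R.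
Proof.
move=> m_gt0; have C_2m1 : 'C((2 * m).+1, 2) = (m * (2 * m + 1))%N.
  by rewrite bin2odd /= ?oddM // mul2n doubleK; lia.
rewrite det_antitrig => [|r k rk_big]; last by rewrite !mxE !ifF ?addr0 //; lia.
have rev_k (k : 'I_(2 * m).+1) : ((2 * m).+1 - k.+1 + k)%N = (2 * m)%N.
  by have := ltn_ord k; lia.
have two_m_neq_m : (2 * m == m)%N = false by lia.
under eq_bigr do rewrite !mxE /= rev_k eqxx two_m_neq_m add0r.
rewrite !big_split /= prodr_const card_ord prodrXr natr_prod.
by rewrite -(big_mkord xpredT id) bin2_sum C_2m1 addn1 !mulrA.
Qed.

Lemma det_binomial_mx m (a : 'I_(2 * m).+1 -> R) (u v : R) : (0 < m)%N ->
  \det (binomial_mx a u v)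
  = (-1) ^+ (m * (2 * m + 1)) * u ^+ (2 * m + 1) * v ^+ (m * (2 * m + 1))
    * ((\prod_(r < (2 * m).+1) 'C(2 * m, r))%N)%:R
    * \prod_(i < (2 * m).+1) \prod_(j < (2 * m).+1 | (i < j)%N)
        (a j ^+ 2 - a i ^+ 2) ^+ 2.
Proof.
move=> m_gt0; have det_V2 : \det (Vandermonde (2 * m).+1 (\row_j a j ^+ 2)) ^+ 2
    = \prod_(i < (2 * m).+1) \prod_(j < (2 * m).+1 | (i < j)%N)
        (a j ^+ 2 - a i ^+ 2) ^+ 2.
  rewrite det_Vandermonde -prodrXl; apply: eq_bigr => i _.
  by rewrite -prodrXl; apply: eq_bigr => j _; rewrite !mxE.
by rewrite binomial_mxE !det_mulmx det_tr det_binomial_coef_mx // -det_V2; ring.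
Qed.
End BinomialDeterminant.

Theorem theorem1p2 (p m : nat) (hp : prime p) (hpm : p = (4 * m + 1)%N)
  (a : 'I_(2 * m).+1 -> 'F_p)
  (ha : forall i j : 'I_(2 * m).+1, (i < j)%N -> a i ^+ 2 != a j ^+ 2)
  (u v : 'F_p) :
  \det (\matrix_(i < (2 * m).+1, j < (2 * m).+1)
          ((legendre (a i + a j))%:~R + (legendre (a i - a j))%:~R
           + u * (legendre (a i ^+ 2 + v * a j ^+ 2))%:~R) : 'M['F_p]_((2 * m).+1))
  = (-1) ^+ (m * (2 * m + 1)) * u ^+ (2 * m + 1) * v ^+ (m * (2 * m + 1))
    * ((\prod_(r < (2 * m).+1) 'C(2 * m, r))%N)%:R
    * \prod_(i < (2 * m).+1) \prod_(j < (2 * m).+1 | (i < j)%N)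
        (a j ^+ 2 - a i ^+ 2) ^+ 2.
Proof.
have m_gt0 : (0 < m)%N by rewrite lt0n; apply: contraTneq hp => m0; rewrite hpm m0.
have p_odd : odd p by rewrite hpm addn1 /= oddM.
have p_half : p./2 = (2 * m)%N by rewrite hpm; lia.
rewrite -det_binomial_mx //; congr (\det _); apply/matrixP => i j.
by rewrite !mxE !legendreE // p_half.
Qed.
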